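(* Let $X$ be a real or complex Banach space, $(A(n))_{n\in\mathbb{N}}$ a sequence in $\mathcal{B}(X)$, and $P:\mathbb{N}\to\mathcal{B}(X)$ a family of projections compatible with the system $x_{n+1}=A(n)x_n$, with complementary family $Q(n)=I-P(n)$. Then the system is $P$-nonuniformly exponentially dichotomic if and only if there exist a constant $d>0$ and a sequence of real numbers $S:\mathbb{N}\to(0,\infty)$ such that \[ \sum_{j=n}^{\infty}e^{d(j-n)}\|\mathcal{A}_P(j,p)x\|+\sum_{k=n}^{m}e^{d(m-k)}\|\mathcal{A}_Q(k,n)x\|\le S(n)\|\mathcal{A}_P(n,p)x\|+S(m)\|\mathcal{A}_Q(m,n)x\| \] for all $(m,n,p)\in T$ and all $x\in X$.
   Context: $\mathbb{N}$ denotes the set of positive integers; $\mathcal{B}(X)$ is the Banach algebra of bounded linear operators on $X$, and $I$ is the identity operator. $\Delta=\{(m,n)\in\mathbb{N}^2: m\ge n\}$ and $T=\{(m,n,p)\in\mathbb{N}^3: m\ge n\ge p\}$. A family of projections is a map $P:\mathbb{N}\to\mathcal{B}(X)$ with $P(n)^2=P(n)$ for all $n$; its complementary family is $Q(n)=I-P(n)$. $P$ is compatible with the system $x_{n+1}=A(n)x_n$ if $A(n+1)P(n)=P(n+1)A(n+1)$ for all $n\in\mathbb{N}$. For $(m,n)\in\Delta$ define $\mathcal{A}_P(m,n)=A(m)\cdots A(n+1)P(n)$ if $m>n$ and $\mathcal{A}_P(n,n)=P(n)$; similarly $\mathcal{A}_Q(m,n)=A(m)\cdots A(n+1)Q(n)$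 if $m>n$ and $\mathcal{A}_Q(n,n)=Q(n)$. The system is $P$-nonuniformly exponentially dichotomic if there exist a constant $\alpha>0$ and a nondecreasing sequence of real numbers $N:\mathbb{N}\to(0,\infty)$ such that $e^{\alpha(m-n)}\big(\|\mathcal{A}_P(m,n)x\|+\|Q(n)x\|\big)\le N(n)\|P(n)x\|+N(m)\|\mathcal{A}_Q(m,n)x\|$ for all $(m,n)\in\Delta$, $x\in X$. *)

From HB Require Import structures.
From mathcomp Require Import all_boot all_order all_algebra.
From mathcomp Require Import all_classical all_reals all_analysis.
Set Implicit Arguments. Unset Strict Implicit. Unset Printing Implicit Defensive.
Import Order.TTheory GRing.Theory Num.Theory.
Import numFieldNormedType.Exports.
Local Open Scope ring_scope.

Section Defs.
Variables (R : realType) (X : completeNormedModType R).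

(* B(X): bounded (= continuous) linear operators on X *)
Definition bounded_op (f : X -> X) : Prop := linear f /\ continuous f.

Definition compl_fam (P : nat -> X -> X) : nat -> X -> X :=
  fun n x => x - P n x.

Fixpoint evol (A : nat -> X -> X) (n k : nat) (x : X) : X :=
  match k with
  | 0 => x
  | k'.+1 => A (n + k'.+1)%N (evol A n k' x)
  end.

(* cocycle with projection: A(m)...A(n+1)F(n) for m > n, F(n) for m = n *)
Definition calA (A F : nat -> X -> X) (m n : nat) (x : X) : X :=
  evol A n (m - n) (F n x).

(* compatibility, for all n in N = {1,2,...} *)
Definition compatible (A P : nat -> X -> X) : Prop :=
  forall n, (1 <= n)%N -> forall x, A n.+1 (P n x) = P n.+1 (A n.+1 x).

Definition nonunif_exp_dichotomic (A P : nat -> X -> X) : Prop :=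
  exists alpha : R, 0 < alpha /\
  exists N : nat -> R,
    (forall n, (1 <= n)%N -> 0 < N n) /\
    (forall n m, (1 <= n)%N -> (n <= m)%N -> N n <= N m) /\
    (forall m n x, (1 <= n)%N -> (n <= m)%N ->
      expR (alpha * (m - n)%:R) *
        (`|calA A P m n x| + `|compl_fam P n x|)
      <= N n * `|P n x| + N m * `|calA A (compl_fam P) m n x|).
End Defs.

From HB Require Import structures.
From mathcomp Require Import all_boot all_order all_algebra.
From mathcomp Require Import all_classical all_reals all_analysis.
From mathcomp Require Import zify ring.
Import Order.TTheory GRing.Theory Num.Theory.
Import numFieldNormedType.Exports.
Set Implicit Arguments.
Unset Strict Implicit.
Local Open Scope ring_scope.

(* Compatibility makes both [P] and [Q = I - P] cocycle-invariant projection
   families, and the two cocycles annihilate each other's images.  Applying the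
   dichotomy to [A_P(n,p) x] and to [A_Q(k,n) x] therefore separates it into a
   pure decay estimate [e^(a(j-n)) |A_P(j,p) x| <= N(n) |A_P(n,p) x|] and a pure
   growth estimate [e^(a(m-k)) |A_Q(k,n) x| <= N(m) |A_Q(m,n) x|].  With
   [d = a/2] the weights [e^(d(j-n))] and [e^(d(m-k))] are then paid for by a
   geometric series of ratio [e^(-d)].  Conversely, for [p = n] the single terms
   [j = m] and [k = n] of the two sums are the dichotomy estimate, and the
   running maximum of [S] provides the nondecreasing sequence [N]. *)

Section LinearFun.
Variables (R : pzRingType) (U V : lmodType R) (f : U -> V).
Hypothesis lin_f : linear f.

Lemma linear_fun0 : f 0 = 0.
Proof.
have := lin_f 1 0 0; rewrite !scale1r addr0 => h.
by apply: (addrI (f 0)); rewrite addr0 -h.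
Qed.

Lemma linear_funB x y : f (x - y) = f x - f y.
Proof. by have := lin_f (-1) y x; rewrite !scaleN1r [x - y]addrC => ->; rewrite addrC. Qed.

End LinearFun.

Fixpoint prefix_max {R : realDomainType} (S : nat -> R) (n : nat) : R :=
  if n is k.+1 then Num.max (prefix_max S k) (S k.+1) else S 0%N.

Lemma prefix_max_ge {R : realDomainType} (S : nat -> R) n : S n <= prefix_max S n.
Proof. by case: n => [|n] //=; rewrite le_max lexx orbT. Qed.

Lemma prefix_max_mono {R : realDomainType} (S : nat -> R) n m :
  (n <= m)%N -> prefix_max S n <= prefix_max S m.
Proof.
elim: m => [|m IHm]; first by rewrite leqn0 => /eqP ->.
rewrite leq_eqVlt => /orP [/eqP -> //|]; rewrite ltnS => /IHm.
by move/le_trans; apply; rewrite /= le_max lexx.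
Qed.

Section Geometric.
Variable R : realType.

Lemma sum_geometric_le (q : R) n K : 0 < q -> q < 1 ->
  \sum_(n <= j < K) q ^+ (j - n) <= (1 - q)^-1.
Proof.
move=> q0 q1; case: (leqP n K) => nK; last first.
  by rewrite big_geq ?(ltnW nK) // invr_ge0 subr_ge0 ltW.
rewrite -{1}(add0n n) big_addn.
have -> : \sum_(0 <= i < K - n) q ^+ (i + n - n) = series (geometric 1 q) (K - n)%N.
  by apply: eq_bigr => i _; rewrite addnK /geometric /= mul1r.
have := geometric_le_lim (K - n)%N ler01 q0.
by rewrite ger0_norm ?(ltW q0) // mul1r => /(_ q1).
Qed.

Lemma sum_geometric_rev_le (q : R) n m : 0 < q -> q < 1 ->
  \sum_(n <= k < m.+1) q ^+ (m - k) <= (1 - q)^-1.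
Proof.
move=> q0 q1.
have -> : \sum_(n <= k < m.+1) q ^+ (m - k) = \sum_(n <= k < m.+1) q ^+ (k - n).
  by rewrite big_nat_rev; apply: eq_big_nat => k /andP [nk km]; congr (q ^+ _); lia.
exact: sum_geometric_le.
Qed.

Lemma nneseries_le_of_partial (u : nat -> R) n c : (forall j, 0 <= u j) ->
  (forall K, \sum_(n <= j < K) u j <= c) ->
  (\sum_(n <= j <oo) (u j)%:E <= c%:E)%E.
Proof.
move=> u_ge0 u_le; apply: lime_le.
  by apply: is_cvg_nneseries => j _ _; rewrite lee_fin.
by apply: nearW => K; rewrite sumEFin lee_fin.
Qed.

Lemma expR_half_weight_le (d v B : R) (k : nat) :
  expR ((d + d) * k%:R) * v <= B -> expR (d * k%:R) * v <= B * expR (- d) ^+ k.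
Proof.
have -> : expR (d * k%:R) = expR (- d) ^+ k * expR ((d + d) * k%:R).
  by rewrite -expRM_natr -expRD; congr expR; ring.
by rewrite -mulrA [B * _]mulrC => h; rewrite ler_wpM2l // exprn_ge0 // expR_ge0.
Qed.

Lemma sum_expR_weight_le (d c : R) (u : nat -> R) n K : 0 < d -> 0 <= c ->
  (forall j, (n <= j < K)%N -> expR ((d + d) * (j - n)%:R) * u j <= c) ->
  \sum_(n <= j < K) expR (d * (j - n)%:R) * u j <= c / (1 - expR (- d)).
Proof.
move=> d0 c0 u_le.
apply: le_trans (_ : \sum_(n <= j < K) c * expR (- d) ^+ (j - n) <= _).
  by apply: ler_sum_nat => j /u_le /expR_half_weight_le.
by rewrite -mulr_sumr ler_wpM2l // sum_geometric_le ?expR_gt0 // expR_lt1 oppr_lt0.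
Qed.

Lemma sum_expR_weight_rev_le (d c : R) (u : nat -> R) n m : 0 < d -> 0 <= c ->
  (forall k, (n <= k <= m)%N -> expR ((d + d) * (m - k)%:R) * u k <= c) ->
  \sum_(n <= k < m.+1) expR (d * (m - k)%:R) * u k <= c / (1 - expR (- d)).
Proof.
move=> d0 c0 u_le.
apply: le_trans (_ : \sum_(n <= k < m.+1) c * expR (- d) ^+ (m - k) <= _).
  by apply: ler_sum_nat => k; rewrite ltnS => /u_le /expR_half_weight_le.
by rewrite -mulr_sumr ler_wpM2l // sum_geometric_rev_le ?expR_gt0 // expR_lt1 oppr_lt0.
Qed.

Lemma nneseries_ge_term (u : nat -> R) n m : (forall j, 0 <= u j) -> (n <= m)%N ->
  ((u m)%:E <= \sum_(n <= j <oo) (u j)%:E)%E.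
Proof.
move=> u_ge0 nm; apply: le_trans (nneseries_lim_ge m.+1 _); last first.
  by move=> j _ _; rewrite lee_fin.
by rewrite sumEFin lee_fin big_nat_recr ?lerDr ?sumr_ge0.
Qed.

End Geometric.

Section Cocycle.
Variables (R : realType) (X : completeNormedModType R) (A : nat -> X -> X).
Hypothesis linA : forall n, (1 <= n)%N -> linear (A n).

Lemma evol0 n k : evol A n k 0 = 0.
Proof. by elim: k => [|k IHk] //=; rewrite IHk; apply/linear_fun0/linA; rewrite addnS. Qed.

Lemma evolD n k j x : evol A n (k + j) x = evol A (n + k) j (evol A n k x).
Proof.
elim: j => [|j IHj] /=; first by rewrite addn0.
by rewrite addnS /= IHj; congr A; lia.
Qed.

Lemma evol_compatible (F : nat -> X -> X) n k x : compatible A F -> (1 <= n)%N ->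
  evol A n k (F n x) = F (n + k)%N (evol A n k x).
Proof.
move=> cF n1; elim: k => [|k IHk] /=; first by rewrite addn0.
by rewrite IHk addnS cF // (leq_trans n1 (leq_addr _ _)).
Qed.

Lemma calA_nn (F : nat -> X -> X) n x : calA A F n n x = F n x.
Proof. by rewrite /calA subnn. Qed.

Section ProjectionFamily.
Variable F : nat -> X -> X.
Hypothesis idemF : forall n, (1 <= n)%N -> forall x, F n (F n x) = F n x.
Hypothesis compF : compatible A F.

Lemma calA_fixed n p x : (1 <= p)%N -> (p <= n)%N ->
  F n (calA A F n p x) = calA A F n p x.
Proof.
move=> p1 pn; rewrite /calA evol_compatible // subnKC // idemF //.
exact: leq_trans p1 pn.
Qed.

Lemma calA_cocycle j n p x : (1 <= p)%N -> (p <= n)%N -> (n <= j)%N ->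
  calA A F j n (calA A F n p x) = calA A F j p x.
Proof.
move=> p1 pn nj; rewrite {1}/calA calA_fixed // /calA -[in evol A n](subnKC pn).
by rewrite -evolD; congr evol; lia.
Qed.

Lemma calA_annihilated (G : nat -> X -> X) j n p x :
  (forall k, (1 <= k)%N -> forall y, G k (F k y) = 0) ->
  (1 <= p)%N -> (p <= n)%N -> calA A G j n (calA A F n p x) = 0.
Proof.
move=> GF0 p1 pn; rewrite /calA (evol_compatible (F := F)) // subnKC // GF0 ?evol0 //.
exact: leq_trans p1 pn.
Qed.

End ProjectionFamily.

Section Complement.
Variable P : nat -> X -> X.
Hypothesis linP : forall n, (1 <= n)%N -> linear (P n).
Hypothesis idemP : forall n, (1 <= n)%N -> forall x, P n (P n x) = P n x.

Lemma compl_idem n : (1 <= n)%N ->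
  forall x, compl_fam P n (compl_fam P n x) = compl_fam P n x.
Proof. by move=> n1 x; rewrite /compl_fam (linear_funB (linP n1)) idemP // !subrr subr0. Qed.

Lemma compl_compatible : compatible A P -> compatible A (compl_fam P).
Proof. by move=> cP n n1 x; rewrite /compl_fam (linear_funB (linA (ltn0Sn n))) cP.
Qed.

Lemma compl_proj n : (1 <= n)%N -> forall x, compl_fam P n (P n x) = 0.
Proof. by move=> n1 x; rewrite /compl_fam idemP // subrr. Qed.

Lemma proj_compl n : (1 <= n)%N -> forall x, P n (compl_fam P n x) = 0.
Proof. by move=> n1 x; rewrite /compl_fam (linear_funB (linP n1)) idemP // subrr. Qed.

End Complement.
End Cocycle.

Definition dichotomy_sum_bound {R : realType} {X : completeNormedModType R}
    (A P : nat -> X -> X) (d : R) (S : nat -> R) : Prop :=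
  (forall n, (1 <= n)%N -> 0 < S n) /\
  (forall m n p x, (1 <= p)%N -> (p <= n)%N -> (n <= m)%N ->
    ((\sum_(n <= j <oo) (expR (d * (j - n)%:R) * `|calA A P j p x|)%:E) +
     (\sum_(n <= k < m.+1) expR (d * (m - k)%:R)
                            * `|calA A (compl_fam P) k n x|)%:E
     <= (S n * `|calA A P n p x| + S m * `|calA A (compl_fam P) m n x|)%:E)%E).

Section Dichotomy.
Variables (R : realType) (X : completeNormedModType R) (A P : nat -> X -> X).
Hypothesis linA : forall n, (1 <= n)%N -> linear (A n).
Hypothesis linP : forall n, (1 <= n)%N -> linear (P n).
Hypothesis idemP : forall n, (1 <= n)%N -> forall x, P n (P n x) = P n x.
Hypothesis compP : compatible A P.
Local Notation Q := (compl_fam P).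

Section Estimates.
Variables (alpha : R) (N : nat -> R).
Hypothesis dichotomy : forall m n x, (1 <= n)%N -> (n <= m)%N ->
  expR (alpha * (m - n)%:R) * (`|calA A P m n x| + `|Q n x|)
  <= N n * `|P n x| + N m * `|calA A Q m n x|.

Lemma dichotomy_decay j n p x : (1 <= p)%N -> (p <= n)%N -> (n <= j)%N ->
  expR (alpha * (j - n)%:R) * `|calA A P j p x| <= N n * `|calA A P n p x|.
Proof.
move=> p1 pn nj; have n1 := leq_trans p1 pn.
have Py : P n (calA A P n p x) = calA A P n p x by exact: calA_fixed.
have Qy : Q n (calA A P n p x) = 0 by rewrite /compl_fam Py subrr.
have := @dichotomy j n (calA A P n p x) n1 nj.
rewrite calA_cocycle // (calA_annihilated linA compP) //; last exact: compl_proj.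
by rewrite Py Qy !normr0 mulr0 !addr0.
Qed.

Lemma dichotomy_growth m k n x : (1 <= n)%N -> (n <= k)%N -> (k <= m)%N ->
  expR (alpha * (m - k)%:R) * `|calA A Q k n x| <= N m * `|calA A Q m n x|.
Proof.
move=> n1 nk km; have k1 := leq_trans n1 nk.
have compQ := compl_compatible linA compP.
have Qw : Q k (calA A Q k n x) = calA A Q k n x.
  by apply: calA_fixed => //; exact: compl_idem.
have Pw : P k (calA A Q k n x) = 0 by rewrite -Qw proj_compl.
have := @dichotomy m k (calA A Q k n x) k1 km.
rewrite (calA_annihilated linA compQ) //; last exact: proj_compl.
rewrite Qw Pw calA_cocycle //; last exact: compl_idem.
by rewrite !normr0 mulr0 !add0r.
Qed.

End Estimates.

Lemma dichotomic_sum_bound : nonunif_exp_dichotomic A P ->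
  exists d : R, 0 < d /\ exists S, dichotomy_sum_bound A P d S.
Proof.
move=> [alpha [alpha0 [N [N0 [_ dichotomy]]]]].
pose d := alpha / 2; pose q := expR (- d).
have alpha_dd : alpha = d + d by rewrite /d -splitr.
have d0 : 0 < d by rewrite divr_gt0.
have q1 : q < 1 by rewrite expR_lt1 oppr_lt0.
exists d; split=> //; exists (fun n => N n / (1 - q)); split.
  by move=> n n1; rewrite mulr_gt0 ?N0 // invr_gt0 subr_gt0.
move=> m n p x p1 pn nm; have n1 := leq_trans p1 pn.
rewrite EFinD; apply: leeD.
- apply: nneseries_le_of_partial => [j|K]; first by rewrite mulr_ge0 ?expR_ge0.
  rewrite mulrAC; apply: sum_expR_weight_le => // [|j /andP [nj _]].
    by rewrite mulr_ge0 // ltW // N0.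
  by rewrite -alpha_dd; exact: dichotomy_decay.
- rewrite lee_fin mulrAC; apply: sum_expR_weight_rev_le => // [|k /andP [nk km]].
    by rewrite mulr_ge0 // ltW // N0 // (leq_trans n1 nm).
  by rewrite -alpha_dd; exact: dichotomy_growth.
Qed.

Lemma sum_bound_dichotomic d S : 0 < d -> dichotomy_sum_bound A P d S ->
  nonunif_exp_dichotomic A P.
Proof.
move=> d0 [S0 sum_bound]; exists d; split=> //; exists (prefix_max S); split.
  by move=> n n1; apply: lt_le_trans (S0 _ n1) (prefix_max_ge S n).
split=> [n m _|m n x n1 nm]; first exact: prefix_max_mono.
have := sum_bound m n n x n1 (leqnn n) nm; rewrite calA_nn => bound.
have termP : ((expR (d * (m - n)%:R) * `|calA A P m n x|)%:E
    <= \sum_(n <= j <oo) (expR (d * (j - n)%:R) * `|calA A P j n x|)%:E)%E.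
  apply: (nneseries_ge_term (u := fun j => expR (d * (j - n)%:R) * `|calA A P j n x|)) nm.
  by move=> j; rewrite mulr_ge0 ?expR_ge0.
have termQ : expR (d * (m - n)%:R) * `|Q n x|
    <= \sum_(n <= k < m.+1) expR (d * (m - k)%:R) * `|calA A Q k n x|.
  by rewrite big_ltn ?ltnS // calA_nn lerDl sumr_ge0.
rewrite mulrDr; apply: le_trans (_ : _ <= S n * `|P n x| + S m * `|calA A Q m n x|) _.
  by rewrite -lee_fin EFinD; apply: le_trans bound; apply: leeD; rewrite ?lee_fin.
by apply: lerD; apply: ler_wpM2r => //; exact: prefix_max_ge.
Qed.

End Dichotomy.

Theorem mainTheorem1 (R : realType) (X : completeNormedModType R)
  (A P : nat -> X -> X) :
  (forall n, (1 <= n)%N -> bounded_op (A n)) ->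
  (forall n, (1 <= n)%N -> bounded_op (P n)) ->
  (forall n, (1 <= n)%N -> forall x, P n (P n x) = P n x) ->
  compatible A P ->
  nonunif_exp_dichotomic A P <->
  exists d : R, 0 < d /\
  exists S : nat -> R,
    (forall n, (1 <= n)%N -> 0 < S n) /\
    (forall m n p x, (1 <= p)%N -> (p <= n)%N -> (n <= m)%N ->
      ((\sum_(n <= j <oo) (expR (d * (j - n)%:R) * `|calA A P j p x|)%:E) +
       (\sum_(n <= k < m.+1) expR (d * (m - k)%:R)
                              * `|calA A (compl_fam P) k n x|)%:E
       <= (S n * `|calA A P n p x| + S m * `|calA A (compl_fam P) m n x|)%:E)%E).
Proof.
move=> boundedA boundedP idemP compP.
have linA n (n1 : (1 <= n)%N) := (boundedA n n1).1.
have linP n (n1 : (1 <= n)%N) := (boundedP n n1).1.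
split=> [/(dichotomic_sum_bound linA linP idemP compP) // | [d [d0 [S bound]]]].
exact: sum_bound_dichotomic d0 bound.
Qed.
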